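(* An input sequence $\bar{\mathbf{u}} = (\mathbf{u}_0,\ldots,\mathbf{u}_N) \in \bar{U}$ is a separating input (i.e. $Y_N^{[i]}(\bar{\mathbf{u}}) \cap Y_N^{[j]}(\bar{\mathbf{u}}) = \emptyset$ for every $i,j \in \mathbb{I}$, $i\neq j$) if and only if \[ \begin{bmatrix} \mathbf{N}(i,j) \\ \boldsymbol{\Omega}(i,j) \end{bmatrix} \bar{\mathbf{u}} \notin \mathcal{Y}(i,j) = \left\{ \begin{bmatrix} \mathbf{G}^Y_N(i,j) \\ \mathbf{A}^Y_N(i,j) \end{bmatrix} , \begin{bmatrix} \mathbf{c}^Y_N(i,j) \\ - \mathbf{b}^Y_N(i,j) \end{bmatrix} \right\} \] (a zonotope in generator–center form) for all $i,j \in \mathbb{I}$, $i \neq j$, where $\mathbf{N}(i,j) = \mathbf{F}^{[j]} \bar{\mathbf{H}}^{[j]} - \mathbf{F}^{[i]} \bar{\mathbf{H}}^{[i]} + [\mathbf{0} \;\; (\mathbf{D}^{[j]}-\mathbf{D}^{[i]})]$, $\boldsymbol{\Omega}(i,j) = [(\boldsymbol{\Omega}_N^{[i]})^T \; \mathbf{0} \; (\boldsymbol{\Omega}_N^{[j]})^T \; \mathbf{0}]^T$, and $\mathbf{G}^Y_N(i,j) = [ \mathbf{G}^{Y[i]}_N \;\; -\mathbf{G}^{Y[j]}_N ]$, $\mathbf{c}^Y_N(i,j) = \mathbf{c}^{Y[i]}_N(\bar{\mathbf{0}}) - \mathbf{c}^{Y[j]}_N(\bar{\mathbf{0}})$, $\mathbf{A}^Y_N(i,j)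 = \mathrm{blkdiag}(\mathbf{A}_N^{Y[i]}, \mathbf{A}_N^{Y[j]})$, $\mathbf{b}^Y_N(i,j) = [(\mathbf{b}_N^{Y[i]}(\bar{\mathbf{0}}))^T \;\; (\mathbf{b}_N^{Y[j]}(\bar{\mathbf{0}}))^T]^T$, with $\bar{\mathbf{0}}$ the zero input sequence.
   Context: Constrained zonotope notation: $\{\mathbf{G},\mathbf{c},\mathbf{A},\mathbf{b}\} = \{\mathbf{c}+\mathbf{G}\boldsymbol{\xi} : \|\boldsymbol{\xi}\|_\infty\le1,\ \mathbf{A}\boldsymbol{\xi}=\mathbf{b}\}$; a zonotope is $\{\mathbf{G},\mathbf{c}\}$. Consider $n_m$ linear descriptor models $i \in \mathbb{I} = \{1,\ldots,n_m\}$: $\mathbf{E}^{[i]}\mathbf{x}_k = \mathbf{A}^{[i]}\mathbf{x}_{k-1} + \mathbf{B}^{[i]}\mathbf{u}_{k-1} + \mathbf{B}_w^{[i]}\mathbf{w}_{k-1}$, $\mathbf{y}_k = \mathbf{C}^{[i]}\mathbf{x}_k + \mathbf{D}^{[i]}\mathbf{u}_k + \mathbf{D}_v^{[i]}\mathbf{v}_k$, with $\mathbf{x}_0 \in X_0$, $\mathbf{w}_k \in W$, $\mathbf{v}_k \in V = \{\mathbf{G}_v,\mathbf{c}_v,\mathbf{A}_v,\mathbf{b}_v\}$, $\mathbf{u}_k \in U$, $\bar{U} = U\times\cdots\times U$. For each $i$, with SVD $\mathbf{E}^{[i]} = \mathbf{U}^{[i]}\boldsymbol{\Sigma}^{[i]}(\mathbf{V}^{[i]})^T$,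 $\boldsymbol{\Sigma}^{[i]} = \mathrm{blkdiag}(\tilde{\boldsymbol{\Sigma}}^{[i]},\mathbf{0})$, $\mathbf{T}^{[i]} = ((\mathbf{V}^{[i]})^T)^{-1}$, define $[\tilde{\mathbf{A}}^{[i]};\check{\mathbf{A}}^{[i]}] = \mathrm{blkdiag}((\tilde{\boldsymbol{\Sigma}}^{[i]})^{-1},\mathbf{I})(\mathbf{U}^{[i]})^{-1}\mathbf{A}^{[i]}\mathbf{T}^{[i]}$, and analogously $\tilde{\mathbf{B}}^{[i]},\check{\mathbf{B}}^{[i]}$ from $\mathbf{B}^{[i]}$ and $\tilde{\mathbf{B}}_w^{[i]},\check{\mathbf{B}}_w^{[i]}$ from $\mathbf{B}_w^{[i]}$ (without right-multiplying by $\mathbf{T}^{[i]}$). With $\mathbf{z}_k = (\tilde{\mathbf{z}}_k,\check{\mathbf{z}}_k) = ((\mathbf{T}^{[i]})^{-1}\mathbf{x}_k,\mathbf{w}_k)$, the models become $\tilde{\mathbf{z}}_k = \tilde{\mathbf{A}}_z^{[i]}\mathbf{z}_{k-1} + \tilde{\mathbf{B}}^{[i]}\mathbf{u}_{k-1}$, $\mathbf{0} = \check{\mathbf{A}}_z^{[i]}\mathbf{z}_k + \check{\mathbf{B}}^{[i]}\mathbf{u}_k$, $\mathbf{y}_k = \mathbf{F}^{[i]}\mathbf{z}_k + \mathbf{D}^{[i]}\mathbf{u}_k + \mathbf{D}_v^{[i]}\mathbf{v}_k$, where $\tilde{\mathbf{A}}_z^{[i]} = [\tilde{\mathbf{A}}^{[i]}\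 \tilde{\mathbf{B}}_w^{[i]}]$, $\check{\mathbf{A}}_z^{[i]} = [\check{\mathbf{A}}^{[i]}\ \check{\mathbf{B}}_w^{[i]}]$, $\mathbf{F}^{[i]} = \mathbf{C}^{[i]}\mathbf{T}^{[i]}[\mathbf{I}_n\ \mathbf{0}]$. A known constrained zonotope $X_a$ satisfies $\mathbf{x}_k\in X_a$ for all $k$; $Z_a^{[i]} = (\mathbf{T}^{[i]})^{-1}X_a\times W = \{\mathbf{G}_a^{[i]},\mathbf{c}_a^{[i]},\mathbf{A}_a^{[i]},\mathbf{b}_a^{[i]}\}$ with $\check{\mathbf{c}}_a^{[i]},\check{\mathbf{G}}_a^{[i]}$ the rows corresponding to $\check{\mathbf{z}}$; $\{\mathbf{G}_z^{[i]},\mathbf{c}_z^{[i]},\mathbf{A}_z^{[i]},\mathbf{b}_z^{[i]}\} = (\mathbf{T}^{[i]})^{-1}X_0\times W$. The state reachable set is $Z_N^{[i]}(\bar{\mathbf{u}}) = \{\mathbf{G}_N^{[i]},\mathbf{c}_N^{[i]}(\bar{\mathbf{u}}),\mathbf{A}_N^{[i]},\mathbf{b}_N^{[i]}(\bar{\mathbf{u}})\}$ given by the recursion, for $k=1,\ldots,N$: $\mathbf{c}_k^{[i]} = [\tilde{\mathbf{A}}_z^{[i]}\mathbf{c}_{k-1}^{[i]} + \tilde{\mathbf{B}}^{[i]}\mathbf{u}_{k-1};\ \check{\mathbf{c}}_a^{[i]}]$, $\mathbf{G}_k^{[i]} = \begin{bmatrix}\tilde{\mathbf{A}}_z^{[i]}\mathbf{G}_{k-1}^{[i]}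 & \mathbf{0}\\ \mathbf{0} & \check{\mathbf{G}}_a^{[i]}\end{bmatrix}$, $\mathbf{A}_k^{[i]} = \begin{bmatrix}\mathrm{blkdiag}(\mathbf{A}_{k-1}^{[i]},\mathbf{A}_a^{[i]}) \\ \check{\mathbf{A}}_z^{[i]}\mathbf{G}_k^{[i]}\end{bmatrix}$, $\mathbf{b}_k^{[i]} = [\mathbf{b}_{k-1}^{[i]};\ \mathbf{b}_a^{[i]};\ -\check{\mathbf{A}}_z^{[i]}\mathbf{c}_k^{[i]} - \check{\mathbf{B}}^{[i]}\mathbf{u}_k]$, initialized with $\mathbf{G}_0^{[i]} = \mathbf{G}_z^{[i]}$, $\mathbf{c}_0^{[i]} = \mathbf{c}_z^{[i]}$, $\mathbf{A}_0^{[i]} = [\mathbf{A}_z^{[i]};\ \check{\mathbf{A}}_z^{[i]}\mathbf{G}_0^{[i]}]$, $\mathbf{b}_0^{[i]} = [\mathbf{b}_z^{[i]};\ -\check{\mathbf{A}}_z^{[i]}\mathbf{c}_0^{[i]} - \check{\mathbf{B}}^{[i]}\mathbf{u}_0]$. These are affine in $\bar{\mathbf{u}}$: $\mathbf{c}_N^{[i]}(\bar{\mathbf{u}}) = \mathbf{c}_N^{[i]}(\bar{\mathbf{0}}) + \mathbf{H}_N^{[i]}\bar{\mathbf{u}}$ and $\mathbf{b}_N^{[i]}(\bar{\mathbf{u}}) = \mathbf{b}_N^{[i]}(\bar{\mathbf{0}}) + \boldsymbol{\Omega}_N^{[i]}\bar{\mathbf{u}}$, where $\mathbf{H}_h^{[i]}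 = [\ \cdots\ \mathbf{M}^{h-m}[\tilde{\mathbf{B}}^{[i]};\mathbf{0}]\ \cdots\ \mathbf{0}\ \cdots]$ ($m=1,\ldots,h$, followed by $N-h+1$ zero blocks), $\mathbf{M} = [\tilde{\mathbf{A}}_z^{[i]};\mathbf{0}]$, $\mathbf{H}_0^{[i]} = \mathbf{0}$, $\bar{\mathbf{H}}^{[i]} = [(\mathbf{H}_0^{[i]})^T\ \cdots\ (\mathbf{H}_N^{[i]})^T]^T$, $\boldsymbol{\Omega}_N^{[i]} = \boldsymbol{\Gamma}_N^{[i]} + \boldsymbol{\Upsilon}_N^{[i]}\bar{\mathbf{H}}^{[i]}$, $\boldsymbol{\Upsilon}_N^{[i]} = \mathrm{blkdiag}([\mathbf{0};-\check{\mathbf{A}}_z^{[i]}],\ldots)$, $\boldsymbol{\Gamma}_N^{[i]} = \mathrm{blkdiag}([\mathbf{0};-\check{\mathbf{B}}^{[i]}],\ldots)$ ($N+1$ blocks each). The output reachable set is $Y_N^{[i]}(\bar{\mathbf{u}}) = \mathbf{F}^{[i]}Z_N^{[i]}(\bar{\mathbf{u}}) \oplus \mathbf{D}^{[i]}\mathbf{u}_N \oplus \mathbf{D}_v^{[i]}V = \{\mathbf{G}_N^{Y[i]},\mathbf{c}_N^{Y[i]}(\bar{\mathbf{u}}),\mathbf{A}_N^{Y[i]},\mathbf{b}_N^{Y[i]}(\bar{\mathbf{u}})\}$ with $\mathbf{c}_N^{Y[i]} = \mathbf{F}^{[i]}\mathbf{c}_N^{[i]}(\bar{\mathbf{u}})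 + \mathbf{D}^{[i]}\mathbf{u}_N + \mathbf{D}_v^{[i]}\mathbf{c}_v$, $\mathbf{G}_N^{Y[i]} = [\mathbf{F}^{[i]}\mathbf{G}_N^{[i]}\ \mathbf{G}_v]$, $\mathbf{A}_N^{Y[i]} = \mathrm{blkdiag}(\mathbf{A}_N^{[i]},\mathbf{A}_v)$, $\mathbf{b}_N^{Y[i]} = [\mathbf{b}_N^{[i]}(\bar{\mathbf{u}});\ \mathbf{b}_v]$. In $\mathbf{N}(i,j)$ the block $[\mathbf{0}\ (\mathbf{D}^{[j]}-\mathbf{D}^{[i]})]$ acts on the last input $\mathbf{u}_N$; the zero blocks in $\boldsymbol{\Omega}(i,j)$ correspond to the $\mathbf{b}_v$ rows. *)

(* Constrained-zonotope reachable sets of linear descriptor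
   models, in the transformed (SVD) coordinates of the paper. *)
From HB Require Import structures.
From mathcomp Require Import all_boot all_order all_algebra.
Set Implicit Arguments. Unset Strict Implicit. Unset Printing Implicit Defensive.
Import Order.TTheory GRing.Theory Num.Theory.
Local Open Scope ring_scope.

Definition in_czono (R : realFieldType) (n g m : nat)
  (G : 'M[R]_(n, g)) (c : 'cV[R]_n) (A : 'M[R]_(m, g)) (b : 'cV[R]_m)
  (x : 'cV[R]_n) : Prop :=
  exists xi : 'cV[R]_g,
    (forall j : 'I_g, `|xi j 0| <= 1) /\ A *m xi = b /\ x = c + G *m xi.

Definition in_zono (R : realFieldType) (n g : nat)
  (G : 'M[R]_(n, g)) (c : 'cV[R]_n) (x : 'cV[R]_n) : Prop :=
  exists xi : 'cV[R]_g, (forall j : 'I_g, `|xi j 0| <= 1) /\ x = c + G *m xi.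

Definition uk (R : realFieldType) (N nu : nat) (ubar : 'cV[R]_(N.+1 * nu))
  (k : nat) : 'cV[R]_nu :=
  \col_(l < nu) ubar (mxvec_index (inord k : 'I_N.+1) l) 0.

(* block row matrix [B_0 B_1 ... B_N], each block of width nu *)
Definition blockrow (R : realFieldType) (N m nu : nat)
  (B : 'I_N.+1 -> 'M[R]_(m, nu)) : 'M[R]_(m, N.+1 * nu) :=
  \matrix_(a < m) mxvec (\matrix_(k < N.+1, l < nu) B k a l).

(* ---------- a model i, in transformed coordinates ----------
   z = (z~, z^) with z~ of size rk (dynamic part) and z^ of size qk.
   Atz = A~_z, Acz = A^_z (pa algebraic equations), Bt = B~, Bc = B^,
   Fm = F, Dm = D, Dvm = D_v,
   (Gz, cz, Az, bz) = (T^-1) X_0 x W,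
   (Gca, cca) = rows of G_a, c_a corresponding to z^, (Aa, ba) = A_a, b_a. *)
Record model (R : realFieldType) (nu nv ny : nat) := Model {
  rk : nat; qk : nat; pa : nat; g0 : nat; m0 : nat; ga : nat; ma : nat;
  Atz : 'M[R]_(rk, rk + qk); Acz : 'M[R]_(pa, rk + qk);
  Bt : 'M[R]_(rk, nu); Bc : 'M[R]_(pa, nu);
  Fm : 'M[R]_(ny, rk + qk); Dm : 'M[R]_(ny, nu); Dvm : 'M[R]_(ny, nv);
  Gz : 'M[R]_(rk + qk, g0); cz : 'cV[R]_(rk + qk);
  Az : 'M[R]_(m0, g0); bz : 'cV[R]_m0;
  Gca : 'M[R]_(qk, ga); cca : 'cV[R]_qk;
  Aa : 'M[R]_(ma, ga); ba : 'cV[R]_ma }.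

Section Reach.
Variables (R : realFieldType) (nu nv ny : nat) (M : model R nu nv ny).

Definition rz := (rk M + qk M)%N.

Fixpoint gen (k : nat) : nat :=
  if k is k'.+1 then (gen k' + ga M)%N else g0 M.
Fixpoint con (k : nat) : nat :=
  if k is k'.+1 then (con k' + ma M + pa M)%N else (m0 M + pa M)%N.

Fixpoint Gk (k : nat) : 'M[R]_(rz, gen k) :=
  match k with
  | 0 => Gz M
  | k'.+1 => block_mx (Atz M *m Gk k') 0 0 (Gca M)
  end.

Fixpoint Ak (k : nat) : 'M[R]_(con k, gen k) :=
  match k with
  | 0 => col_mx (Az M) (Acz M *m Gz M)
  | k'.+1 => col_mx (block_mx (Ak k') 0 0 (Aa M)) (Acz M *m Gk k'.+1)
  end.

Fixpoint ck (u : nat -> 'cV[R]_nu) (k : nat) : 'cV[R]_rz :=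
  match k with
  | 0 => cz M
  | k'.+1 => col_mx (Atz M *m ck u k' + Bt M *m u k') (cca M)
  end.

Fixpoint bk (u : nat -> 'cV[R]_nu) (k : nat) : 'cV[R]_(con k) :=
  match k with
  | 0 => col_mx (bz M) (- (Acz M *m cz M) - Bc M *m u 0%N)
  | k'.+1 => col_mx (col_mx (bk u k') (ba M))
                    (- (Acz M *m ck u k'.+1) - Bc M *m u k'.+1)
  end.

Definition Mmat : 'M[R]_rz := col_mx (Atz M) 0.
Definition Bt0 : 'M[R]_(rz, nu) := col_mx (Bt M) 0.

Definition Hh (N h : nat) : 'M[R]_(rz, N.+1 * nu) :=
  blockrow (fun k : 'I_N.+1 =>
    if (k < h)%N then Mmat ^+ (h - 1 - k) *m Bt0 else 0).

Definition Esel (N k : nat) : 'M[R]_(nu, N.+1 * nu) :=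
  blockrow (fun j : 'I_N.+1 => if (j == k :> nat) then 1%:M else 0).

(* Omega_k = Gamma_k + Upsilon_k Hbar, built block-row by block-row:
   its row blocks are [0; -A^_z H_k' - B^ E_k'] (k' = 0..k), the zero parts
   facing b_z resp. b_a. *)
Fixpoint Omk (N k : nat) : 'M[R]_(con k, N.+1 * nu) :=
  match k with
  | 0 => col_mx 0 (- (Acz M *m Hh N 0) - Bc M *m Esel N 0)
  | k'.+1 => col_mx (col_mx (Omk N k') 0)
                    (- (Acz M *m Hh N k'.+1) - Bc M *m Esel N k'.+1)
  end.

Variables (gv mv : nat) (Gv : 'M[R]_(nv, gv)) (cv : 'cV[R]_nv)
          (Av : 'M[R]_(mv, gv)) (bv : 'cV[R]_mv).

Definition GY (N : nat) : 'M[R]_(ny, gen N + gv) :=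
  row_mx (Fm M *m Gk N) (Dvm M *m Gv).
Definition cY (N : nat) (ubar : 'cV[R]_(N.+1 * nu)) : 'cV[R]_ny :=
  Fm M *m ck (uk ubar) N + Dm M *m uk ubar N + Dvm M *m cv.
Definition AY (N : nat) : 'M[R]_(con N + mv, gen N + gv) :=
  block_mx (Ak N) 0 0 Av.
Definition bY (N : nat) (ubar : 'cV[R]_(N.+1 * nu)) : 'cV[R]_(con N + mv) :=
  col_mx (bk (uk ubar) N) bv.

Definition inY (N : nat) (ubar : 'cV[R]_(N.+1 * nu)) (y : 'cV[R]_ny) : Prop :=
  in_czono (GY N) (cY ubar) (AY N) (bY ubar) y.

End Reach.

Section Pair.
Variables (R : realFieldType) (nu nv ny : nat) (Mi Mj : model R nu nv ny)
  (gv mv : nat) (Gv : 'M[R]_(nv, gv)) (cv : 'cV[R]_nv)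
  (Av : 'M[R]_(mv, gv)) (bv : 'cV[R]_mv) (N : nat).

Definition Nij : 'M[R]_(ny, N.+1 * nu) :=
  Fm Mj *m Hh Mj N N - Fm Mi *m Hh Mi N N
  + blockrow (fun k : 'I_N.+1 => if (k == N :> nat) then Dm Mj - Dm Mi else 0).

Definition Omij : 'M[R]_(con Mi N + mv + (con Mj N + mv), N.+1 * nu) :=
  col_mx (col_mx (Omk Mi N N) 0) (col_mx (Omk Mj N N) 0).

Definition GYij := row_mx (GY Mi Gv N) (- GY Mj Gv N).
Definition AYij := block_mx (AY Mi Av N) 0 0 (AY Mj Av N).
Definition cYij : 'cV[R]_ny :=
  cY Mi cv (0 : 'cV[R]_(N.+1 * nu)) - cY Mj cv (0 : 'cV[R]_(N.+1 * nu)).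
Definition bYij := col_mx (bY Mi bv (0 : 'cV[R]_(N.+1 * nu)))
                          (bY Mj bv (0 : 'cV[R]_(N.+1 * nu))).

Definition in_Yij (ubar : 'cV[R]_(N.+1 * nu)) : Prop :=
  in_zono (col_mx GYij AYij) (col_mx cYij (- bYij)) (col_mx Nij Omij *m ubar).

End Pair.

Definition separating (R : realFieldType) (nu nv ny nm : nat)
  (Ms : 'I_nm -> model R nu nv ny) (gv mv : nat) (Gv : 'M[R]_(nv, gv))
  (cv : 'cV[R]_nv) (Av : 'M[R]_(mv, gv)) (bv : 'cV[R]_mv) (N : nat)
  (ubar : 'cV[R]_(N.+1 * nu)) : Prop :=
  forall i j : 'I_nm, i != j ->
    forall y : 'cV[R]_ny, ~ (inY (Ms i) Gv cv Av bv ubar y /\ inY (Ms j) Gv cv Av bv ubar y).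

(* Y^[i](ubar) and Y^[j](ubar) meet iff there are coefficient vectors xi_i, xi_j
   in the unit ball satisfying both constraint systems and
   c^[i] + G^[i] xi_i = c^[j] + G^[j] xi_j, i.e. iff 0 lies in the zonotope with
   generators [G^Y(i,j); A^Y(i,j)] and center [c^[i](ubar) - c^[j](ubar); -b(ubar)].
   Unrolling the reachability recursion shows that the centers and constraint
   right-hand sides are affine in ubar, with linear parts assembled into N(i,j) and
   Omega(i,j); translating by that linear part moves the center to its value at the
   zero input and the test point from 0 to [N(i,j); Omega(i,j)] ubar. *)

From HB Require Import structures.
From mathcomp Require Import all_boot all_order all_algebra.
Set Implicit Arguments. Unset Strict Implicit. Unset Printing Implicit Defensive.
Import Order.TTheory GRing.Theory Num.Theory.
Local Open Scope ring_scope.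

Section BlockRow.
Variables (R : realFieldType) (N nu : nat).

Lemma blockrowE m (B : 'I_N.+1 -> 'M[R]_(m, nu)) a k l :
  blockrow B a (mxvec_index k l) = B k a l.
Proof. by rewrite !mxE mxvecE mxE. Qed.

Lemma mulmx_blockrow m p (A : 'M[R]_(p, m)) (B : 'I_N.+1 -> 'M[R]_(m, nu)) :
  A *m blockrow B = blockrow (fun k => A *m B k).
Proof.
apply/matrixP=> a c; case/mxvec_indexP: c => k l.
by rewrite blockrowE !mxE; apply: eq_bigr => b _; rewrite blockrowE.
Qed.

Lemma eq_blockrow m (B C : 'I_N.+1 -> 'M[R]_(m, nu)) :
  (forall k, B k = C k) -> blockrow B = blockrow C.
Proof.
move=> eqBC; apply/matrixP=> a c; case/mxvec_indexP: c => k l.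
by rewrite !blockrowE eqBC.
Qed.

Lemma blockrowD m (B C : 'I_N.+1 -> 'M[R]_(m, nu)) :
  blockrow (fun k => B k + C k) = blockrow B + blockrow C.
Proof.
apply/matrixP=> a c; case/mxvec_indexP: c => k l.
by rewrite !mxE !mxvecE !mxE.
Qed.

Lemma blockrowB m (B C : 'I_N.+1 -> 'M[R]_(m, nu)) :
  blockrow (fun k => B k - C k) = blockrow B - blockrow C.
Proof.
apply/matrixP=> a c; case/mxvec_indexP: c => k l.
by rewrite !mxE !mxvecE !mxE.
Qed.

Lemma blockrow_mul m (B : 'I_N.+1 -> 'M[R]_(m, nu)) (ubar : 'cV[R]_(N.+1 * nu)) :
  blockrow B *m ubar = \sum_(k < N.+1) B k *m uk ubar k.
Proof.
apply/matrixP=> a j; rewrite !mxE summxE.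
rewrite (reindex _ (curry_mxvec_bij _ _)) /=.
pose f k l := blockrow B a (mxvec_index k l) * ubar (mxvec_index k l) j.
rewrite (eq_bigr (fun p => f p.1 p.2)); last by case.
rewrite -(pair_bigA _ f).
apply: eq_bigr => k _; rewrite mxE; apply: eq_bigr => l _.
by rewrite /f blockrowE !mxE inord_val (ord1 j).
Qed.

Lemma blockrow_single_mul m (D : 'M[R]_(m, nu)) K (ubar : 'cV[R]_(N.+1 * nu)) :
  (K <= N)%N ->
  blockrow (fun k : 'I_N.+1 => if k == K :> nat then D else 0) *m ubar =
  D *m uk ubar K.
Proof.
move=> leKN; rewrite blockrow_mul (bigD1 (inord K)) //= inordK // eqxx big1 ?addr0 //.
by move=> k; rewrite -val_eqE /= inordK // => /negbTE->; rewrite mul0mx.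
Qed.

Lemma uk0 k : uk (0 : 'cV[R]_(N.+1 * nu)) k = 0.
Proof. by apply/matrixP=> a b; rewrite !mxE. Qed.

End BlockRow.

Section Affine.
Variables (R : realFieldType) (nu nv ny : nat) (M : model R nu nv ny) (N : nat).
Variable ubar : 'cV[R]_(N.+1 * nu).
Local Notation ubar0 := (0 : 'cV[R]_(N.+1 * nu)).

Lemma Hh0 : Hh M N 0 = 0.
Proof.
apply/matrixP=> a c; case/mxvec_indexP: c => k l.
by rewrite blockrowE !mxE.
Qed.

Lemma HhS h :
  Hh M N h.+1 =
  Mmat M *m Hh M N h + blockrow (fun k : 'I_N.+1 => if k == h :> nat then Bt0 M else 0).
Proof.
rewrite /Hh mulmx_blockrow -blockrowD; apply: eq_blockrow => k /=.
case: (ltngtP k h) => [ltkh | lthk | ->].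
- rewrite ltnS (ltnW ltkh) addr0 mulmxA -[Mmat M *m _]/(Mmat M * _) -exprS.
  by rewrite subn1 -subnDA add1n subnSK.
- by rewrite ltnS leqNgt lthk mulmx0 addr0.
- by rewrite ltnSn mulmx0 add0r subn1 subnn expr0 mul1mx.
Qed.

Lemma Esel_mul k : (k <= N)%N -> @Esel R nu N k *m ubar = uk ubar k.
Proof. by move=> leKN; rewrite blockrow_single_mul // mul1mx. Qed.

Lemma ck_affine h : (h <= N)%N ->
  ck M (uk ubar) h = ck M (uk ubar0) h + Hh M N h *m ubar.
Proof.
elim: h => [|h IH] lehN; first by rewrite Hh0 mul0mx addr0 [LHS]/=.
rewrite [LHS]/= [ck _ _ h.+1]/= (IH (ltnW lehN)).
rewrite HhS mulmxDl (blockrow_single_mul _ _ (ltnW lehN)) uk0 mulmx0 addr0 -mulmxA.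
rewrite /Mmat /Bt0 !mul_col_mx !mul0mx !add_col_mx !addr0 mulmxDr.
by rewrite addrA.
Qed.

Lemma bkS u h :
  bk M u h.+1 =
  col_mx (col_mx (bk M u h) (ba M)) (- (Acz M *m ck M u h.+1) - Bc M *m u h.+1).
Proof. by []. Qed.

Lemma bk_affine h : (h <= N)%N ->
  bk M (uk ubar) h = bk M (uk ubar0) h + Omk M N h *m ubar.
Proof.
elim: h => [|h IH] lehN.
  rewrite [LHS]/= [bk _ _ 0]/= [Omk _ _ 0]/= mul_col_mx mul0mx add_col_mx addr0.
  by rewrite Hh0 mulmx0 oppr0 sub0r mulNmx -mulmxA (Esel_mul lehN) uk0 mulmx0 subr0.
rewrite !bkS [Omk _ _ h.+1]/= (IH (ltnW lehN)) (ck_affine lehN).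
rewrite !mul_col_mx !mul0mx !add_col_mx !addr0 uk0 mulmx0 subr0 mulmxDl !mulNmx.
by rewrite -!mulmxA (Esel_mul lehN) mulmxDr opprD addrA.
Qed.

End Affine.

Section Zonotope.
Variable R : realFieldType.

Lemma col_mx_unit_ball g1 g2 (x1 : 'cV[R]_g1) (x2 : 'cV[R]_g2) :
  (forall j, `|col_mx x1 x2 j 0| <= 1) <->
  (forall j, `|x1 j 0| <= 1) /\ (forall j, `|x2 j 0| <= 1).
Proof.
split=> [x_le1 | [x1_le1 x2_le1] j].
  by split=> j; [have := x_le1 (lshift g2 j) | have := x_le1 (rshift g1 j)];
    rewrite (col_mxEu, col_mxEd).
by rewrite -(splitK j); case: (split j) => k; rewrite (col_mxEu, col_mxEd).
Qed.

Lemma in_zono_subr n g (G : 'M[R]_(n, g)) c x :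
  in_zono G c x <-> in_zono G (c - x) 0.
Proof.
split=> -[xi [xi_le1 e]]; exists xi; split=> //.
  by rewrite e opprD addNKr addNr.
by apply/esym/eqP; rewrite -subr_eq0 addrAC -e.
Qed.

Lemma czono_meetP n g1 g2 m1 m2
    (G1 : 'M[R]_(n, g1)) (c1 : 'cV_n) (A1 : 'M_(m1, g1)) (b1 : 'cV_m1)
    (G2 : 'M[R]_(n, g2)) (c2 : 'cV_n) (A2 : 'M_(m2, g2)) (b2 : 'cV_m2) :
  (exists y, in_czono G1 c1 A1 b1 y /\ in_czono G2 c2 A2 b2 y) <->
  in_zono (col_mx (row_mx G1 (- G2)) (block_mx A1 0 0 A2))
          (col_mx (c1 - c2) (- col_mx b1 b2)) 0.
Proof.
have mulE x1 x2 : col_mx (row_mx G1 (- G2)) (block_mx A1 0 0 A2) *m col_mx x1 x2 =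
    col_mx (G1 *m x1 - G2 *m x2) (col_mx (A1 *m x1) (A2 *m x2)).
  by rewrite mul_col_mx mul_row_col mul_block_col !mul0mx addr0 add0r mulNmx.
split=> [[y [[x1 [x1_le1 [A1x1 ey1]]] [x2 [x2_le1 [A2x2 ey2]]]]] | [xi]].
  exists (col_mx x1 x2); split; first exact/col_mx_unit_ball.
  rewrite mulE add_col_mx A1x1 A2x2 addNr addrACA -opprD -ey1 -ey2 subrr.
  by rewrite col_mx0.
rewrite -[xi]vsubmxK mulE add_col_mx -col_mx0.
case=> /col_mx_unit_ball[x1_le1 x2_le1] /eq_col_mx[ec eA].
move/esym: eA; rewrite addrC => /subr0_eq/eq_col_mx[A1x1 A2x2].
move/esym: ec; rewrite addrACA -opprD => /subr0_eq ec.
exists (c1 + G1 *m usubmx xi); split; first by exists (usubmx xi).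
by exists (dsubmx xi).
Qed.

End Zonotope.

Definition cY_slope (R : realFieldType) (nu nv ny : nat) (M : model R nu nv ny)
    (N : nat) : 'M[R]_(ny, N.+1 * nu) :=
  Fm M *m Hh M N N + blockrow (fun k : 'I_N.+1 => if k == N :> nat then Dm M else 0).

Section Pair.
Variables (R : realFieldType) (nu nv ny gv mv : nat).
Variables (Gv : 'M[R]_(nv, gv)) (cv : 'cV[R]_nv) (Av : 'M[R]_(mv, gv)) (bv : 'cV[R]_mv).
Variables (N : nat) (ubar : 'cV[R]_(N.+1 * nu)).
Local Notation ubar0 := (0 : 'cV[R]_(N.+1 * nu)).

Lemma cY_affine (M : model R nu nv ny) :
  cY M cv ubar = cY M cv ubar0 + cY_slope M N *m ubar.
Proof.
rewrite /cY (ck_affine _ _ (leqnn N)) uk0 mulmx0 addr0 /cY_slope mulmxDl.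
rewrite (blockrow_single_mul _ _ (leqnn N)) -mulmxA mulmxDr -!addrA.
by congr (_ + _); rewrite addrA addrC.
Qed.

Lemma bY_affine (M : model R nu nv ny) :
  bY M bv ubar = bY M bv ubar0 + col_mx (Omk M N N *m ubar) 0.
Proof. by rewrite /bY (bk_affine _ _ (leqnn N)) add_col_mx addr0. Qed.

Lemma Nij_slope (Mi Mj : model R nu nv ny) :
  Nij Mi Mj N = cY_slope Mj N - cY_slope Mi N.
Proof.
pose Dsel (D : 'M[R]_(ny, nu)) (k : 'I_N.+1) := if k == N :> nat then D else 0.
rewrite /Nij; have -> : blockrow (fun k : 'I_N.+1 => if k == N :> nat then Dm Mj - Dm Mi else 0) =
    blockrow (Dsel (Dm Mj)) - blockrow (Dsel (Dm Mi)).
  by rewrite -blockrowB; apply: eq_blockrow => k; rewrite /Dsel; case: eqP; rewrite ?subr0.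
by rewrite /cY_slope addrACA opprD.
Qed.

Lemma Yij_center_sub (Mi Mj : model R nu nv ny) :
  col_mx (cYij Mi Mj cv N) (- bYij Mi Mj bv N) - col_mx (Nij Mi Mj N) (Omij Mi Mj mv N) *m ubar =
  col_mx (cY Mi cv ubar - cY Mj cv ubar) (- col_mx (bY Mi bv ubar) (bY Mj bv ubar)).
Proof.
rewrite mul_col_mx (opp_col_mx (Nij Mi Mj N *m ubar)) add_col_mx; congr col_mx.
  by rewrite Nij_slope /cYij (cY_affine Mi) (cY_affine Mj) mulmxBl opprB addrACA -opprD.
by rewrite /bYij /Omij !mul_col_mx !mul0mx (bY_affine Mi) (bY_affine Mj) -add_col_mx opprD.
Qed.

Lemma in_YijP (Mi Mj : model R nu nv ny) :
  in_Yij Mi Mj Gv cv Av bv ubar <->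
  exists y, inY Mi Gv cv Av bv ubar y /\ inY Mj Gv cv Av bv ubar y.
Proof.
rewrite /in_Yij /GYij /AYij; split=> [/in_zono_subr | /czono_meetP meet].
  by rewrite Yij_center_sub => /czono_meetP.
by apply/in_zono_subr; rewrite Yij_center_sub.
Qed.

End Pair.

Theorem theorem1 (R : realFieldType) (nu nv ny nm N : nat)
  (Ms : 'I_nm -> model R nu nv ny)
  (gv mv : nat) (Gv : 'M[R]_(nv, gv)) (cv : 'cV[R]_nv)
  (Av : 'M[R]_(mv, gv)) (bv : 'cV[R]_mv)
  (Uset : 'cV[R]_nu -> Prop)
  (ubar : 'cV[R]_(N.+1 * nu))
  (Hu : forall k : 'I_N.+1, Uset (uk ubar k)) :
  separating Ms Gv cv Av bv ubar <->
  (forall i j : 'I_nm, i != j ->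
     ~ in_Yij (Ms i) (Ms j) Gv cv Av bv ubar).
Proof.
split=> [sep i j neq_ij /in_YijP[y] | disj i j neq_ij y inY_ij].
  exact: sep i j neq_ij y.
by apply: (disj i j neq_ij); apply/in_YijP; exists y.
Qed.
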